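(* Let $(I,s,B,k)$ be an instance of Exact Bin Packing. Let $T$ be the tree with vertex set $\{r\}\cup\{v^i,v^i_1,\dots,v^i_{s(i)-1}: i\in I\}$ and edge set $\{\{v^i,v^i_j\}: i\in I,\,1\le j\le s(i)-1\}\cup\{\{r,v^i\}: i\in I\}$ (i.e., for each item a star with centre $v^i$ and $s(i)-1$ leaves, each centre joined to a root $r$). Then $(I,s,B,k)$ is a yes-instance of Exact Bin Packing if and only if the Collective Graph Exploration instance $(T,r,k,2B)$ is a yes-instance, i.e., there exist $k$ $r$-robot cycles in $T$, each of length at most $2B$, which together traverse every edge of $T$.
   Context: Exact Bin Packing: given a finite set $I$ of items, a positive size $s(i)\in\mathbb{N}$ for each $i\in I$, a positive integer $B$ and a positive integer $k$ with $\sum_{i\in I}s(i)=B\cdot k$, decide whether there is a partition of $I$ into disjoint sets $I_1,\dots,I_k$ with $\sum_{i\in I_j}s(i)=B$ for all $j$. A path in a graph is a sequence $(v_0,\dots,v_\ell)$ of vertices with consecutive vertices adjacent (repetitions allowed), of length $\ell$; a cycle is a path with $v_0=v_\ell$; an $r$-robot cycle is a cycle with $v_0=v_\ell=r$. The CGE instance $(G,v_{\mathsf{init}},k,B)$ is a yes-instance if there are $k$ $v_{\mathsf{init}}$-robot cycles, each of length at most $B$, such that every edge of $G$ is traversed by at least one of them. *)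

From mathcomp Require Import all_boot.
Set Implicit Arguments.
Unset Strict Implicit.
Unset Printing Implicit Defensive.

(* Exact Bin Packing: a partition of the items I into k (labelled) disjoint
   sets I_1..I_k, encoded by the assignment f : I -> 'I_k (item i goes to
   I_(f i)), each part having total size exactly B. *)
Definition exact_bin_packing (I : finType) (s : I -> nat) (B k : nat) : Prop :=
  exists f : I -> 'I_k, forall j : 'I_k, \sum_(i | f i == j) s i = B.

(* An r-robot cycle (v_0,...,v_l) with v_0 = v_l = r is encoded by the
   sequence p = [:: v_1; ...; v_l]; its length is l = size p. *)
Definition robot_cycle (V : eqType) (adj : rel V) (r : V) (p : seq V) : bool :=
  path adj r p && (last r p == r).

Definition cycle_length (V : eqType) (p : seq V) : nat := size p.

Definition traverses (V : eqType) (r : V) (p : seq V) (u v : V) : bool :=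
  ((u, v) \in zip (r :: p) p) || ((v, u) \in zip (r :: p) p).

Definition CGE_yes (V : eqType) (adj : rel V) (r : V) (k Bc : nat) : Prop :=
  exists W : 'I_k -> seq V,
    (forall j, robot_cycle adj r (W j) /\ cycle_length (W j) <= Bc) /\
    (forall u v, adj u v -> exists j, traverses r (W j) u v).

(* The tree T: vertices are None (= r) and Some (i; j) with j : 'I_(s i),
   where (i; 0) is the centre v^i and (i; j), 1 <= j <= s i - 1, is the leaf v^i_j. *)
Definition tree_vertex (I : finType) (s : I -> nat) : finType :=
  option {i : I & 'I_(s i)}.

Definition tree_adj (I : finType) (s : I -> nat) : rel (tree_vertex s) :=
  fun x y =>
  match x, y with
  | None, None => false
  | None, Some v => val (tagged v) == 0
  | Some v, None => val (tagged v) == 0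
  | Some u, Some v =>
      (tag u == tag v) && ((val (tagged u) == 0) != (val (tagged v) == 0))
  end.

Definition tree_root (I : finType) (s : I -> nat) : tree_vertex s := None.

From mathcomp Require Import all_boot zify.
Set Implicit Arguments. Unset Strict Implicit. Unset Printing Implicit Defensive.

(* A packing yields, for each bin, the walk that sweeps the stars of its items one
   after the other (root, centre, each leaf and back, root): its length is
   2 * (sum of the sizes) = 2B.  Conversely, the tree has exactly sum s = Bk edges,
   and every edge is a cut, so a closed walk from the root uses each edge it
   traverses in both directions; hence each of the k walks covers at most B edges.
   Double counting then shows that every walk covers exactly B edges and that no
   edge is covered by two walks.  A walk covering a leaf edge of item i also covers
   the edge from the root to the centre of i, so sending i to the unique walk
   covering that edge is an exact packing. *)

Section Arcs.
Variable V : eqType.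
Implicit Types (x y r : V) (p q : seq V) (S : pred V).

Definition arcs x p : seq (V * V) := zip (x :: p) p.

Lemma arcs_cons x y p : arcs x (y :: p) = (x, y) :: arcs y p.
Proof. by []. Qed.

Lemma arcs_cat x p q : arcs x (p ++ q) = arcs x p ++ arcs (last x p) q.
Proof. by elim: p x => [|y p IHp] x //=; rewrite !arcs_cons IHp. Qed.

Lemma size_arcs x p : size (arcs x p) = size p.
Proof. by rewrite /arcs size_zip /=; lia. Qed.

Lemma mem_arcs_fst x p a b : (a, b) \in arcs x p -> a \in x :: p.
Proof.
elim: p x => [|y p IHp] x //.
rewrite arcs_cons => /predU1P[[-> _]|/IHp ya]; first exact: mem_head.
by rewrite in_cons ya orbT.
Qed.

Lemma path_arcs (e : rel V) x p : path e x p = all (fun a => e a.1 a.2) (arcs x p).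
Proof. by elim: p x => [|y p IHp] x //=; rewrite IHp. Qed.

Lemma traversesE r p u v :
  traverses r p u v = ((u, v) \in arcs r p) || ((v, u) \in arcs r p).
Proof. by []. Qed.

Definition enters S : pred (V * V) := fun a => (a.1 \notin S) && (a.2 \in S).
Definition exits S : pred (V * V) := fun a => (a.1 \in S) && (a.2 \notin S).

Lemma count_enters_exits S x p :
  count (enters S) (arcs x p) + (x \in S) = count (exits S) (arcs x p) + (last x p \in S).
Proof.
elim: p x => [|y p IHp] x //; have := IHp y.
by rewrite arcs_cons /= -/(arcs y p) /enters /exits /=; case: (x \in S); case: (y \in S) => /=; lia.
Qed.

Lemma enters_gt0 S x p : x \notin S -> has S p -> 0 < count (enters S) (arcs x p).
Proof.
elim: p x => [|y p IHp] x // xS.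
rewrite arcs_cons /= -/(arcs y p) -[S y]/(y \in S) {1}/enters /= xS.
by case yS: (y \in S) => //= /(IHp _ (negbT yS)).
Qed.

Section CutEdge.

Variables (adj : rel V) (r : V) (S : pred V) (u v : V).
Hypotheses (adj_sym : symmetric adj) (uS : u \notin S) (vS : v \in S).
Hypothesis cut_edge : forall a b, adj a b -> a \notin S -> b \in S -> (a, b) = (u, v).

Lemma enters_cut_edge p :
  path adj r p -> count (enters S) (arcs r p) = count (pred1 (u, v)) (arcs r p).
Proof.
rewrite path_arcs => /allP adj_arcs; apply: eq_in_count => -[a b] /adj_arcs /= ab.
apply/andP/eqP => [[aS bS]|[-> ->]]; [exact: cut_edge | by rewrite uS vS].
Qed.

Lemma exits_cut_edge p :
  path adj r p -> count (exits S) (arcs r p) = count (pred1 (v, u)) (arcs r p).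
Proof.
rewrite path_arcs => /allP adj_arcs; apply: eq_in_count => -[a b] /adj_arcs /= ab.
apply/andP/eqP => [[aS bS]|[-> ->]]; last by rewrite uS vS.
by rewrite adj_sym in ab; case: (cut_edge ab bS aS) => -> ->.
Qed.

(* A closed walk crosses the only edge into [S] as often inwards as outwards. *)
Lemma robot_cycle_cut_edge p :
  robot_cycle adj r p -> traverses r p u v ->
  ((u, v) \in arcs r p) && ((v, u) \in arcs r p).
Proof.
case/andP=> rp /eqP lastr; have := count_enters_exits S r p.
rewrite lastr enters_cut_edge // exits_cut_edge // addnC [RHS]addnC => /addnI eq_uv.
by rewrite traversesE -!has_pred1 !has_count eq_uv orbb andbb.
Qed.

Lemma path_cut_edge p : path adj r p -> r \notin S -> has S p -> (u, v) \in arcs r p.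
Proof. by move=> rp rS /(enters_gt0 rS); rewrite enters_cut_edge // -has_count has_pred1. Qed.

End CutEdge.

Section Cycles.

Variables (adj : rel V) (r : V).

Lemma robot_cycle_cat p q :
  robot_cycle adj r p -> robot_cycle adj r q -> robot_cycle adj r (p ++ q).
Proof.
rewrite /robot_cycle cat_path last_cat => /andP[rp /eqP lp] /andP[rq lq].
by rewrite rp lp rq lq.
Qed.

Lemma robot_cycle_flatten ps : all (robot_cycle adj r) ps -> robot_cycle adj r (flatten ps).
Proof.
elim: ps => [|p ps IHps] /=; first by rewrite /robot_cycle eqxx.
by case/andP=> cp cps; apply: robot_cycle_cat cp (IHps cps).
Qed.

Lemma arcs_flatten ps p :
  all (robot_cycle adj r) ps -> p \in ps -> {subset arcs r p <= arcs r (flatten ps)}.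
Proof.
elim: ps => [|q ps IHps] //=.
case/andP=> /andP[_ /eqP lq] cps /predU1P[-> | pps] a ap.
  by rewrite arcs_cat mem_cat ap.
by rewrite arcs_cat lq mem_cat IHps ?orbT.
Qed.

Lemma robot_cycle_excursion c q :
  symmetric adj -> adj r c -> robot_cycle adj c q -> robot_cycle adj r (c :: rcons q r).
Proof.
move=> adj_sym rc /andP[cq /eqP lq].
by rewrite /robot_cycle /= rc rcons_path cq lq last_rcons adj_sym rc eqxx.
Qed.

End Cycles.

Lemma arcs_excursion r c q : {subset (r, c) :: arcs c q <= arcs r (c :: rcons q r)}.
Proof. by move=> a; rewrite arcs_cons -cats1 arcs_cat !in_cons mem_cat orbA => ->. Qed.

Definition star_walk c (ls : seq V) : seq V := flatten [seq [:: l; c] | l <- ls].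

Lemma size_star_walk c ls : size (star_walk c ls) = 2 * size ls.
Proof. by elim: ls => [|l ls IHls] //=; rewrite IHls; lia. Qed.

Lemma star_walk_cycle (adj : rel V) c ls :
  symmetric adj -> all (adj c) ls -> robot_cycle adj c (star_walk c ls).
Proof.
move=> adj_sym cls; apply: robot_cycle_flatten; rewrite all_map.
by apply: sub_all cls => l cl; rewrite /robot_cycle /= cl adj_sym cl eqxx.
Qed.

Lemma star_walk_arcs c ls l : l \in ls -> (c, l) \in arcs c (star_walk c ls).
Proof.
elim: ls => [|l' ls IHls] //= /predU1P[->|lls]; first by rewrite arcs_cons mem_head.
by rewrite !arcs_cons !in_cons IHls ?orbT.
Qed.

End Arcs.

Lemma card_tag_pred (I : finType) (T_ : I -> finType) (P : pred I) :
  #|[pred c : {i : I & T_ i} | P (tag c)]| = \sum_(i | P i) #|T_ i|.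
Proof.
rewrite -sum1_card (eq_bigr (fun i => \sum_(t : T_ i) 1)) => [|i _]; last by rewrite sum1_card.
by rewrite (sig_big_dep P (fun i _ => true) (fun _ _ => 1)); apply: eq_bigl => c; rewrite andbT.
Qed.

(* Double counting the incidences [x \in C j] forces both bounds to be tight. *)
Lemma exact_cover (T J : finType) (C : J -> {set T}) (B : nat) :
  (forall j, #|C j| <= B) -> (forall x, exists j, x \in C j) -> #|T| = B * #|J| ->
  (forall j, #|C j| = B) /\ (forall x j j', x \in C j -> x \in C j' -> j = j').
Proof.
move=> leCB coverC cardT; pose D x := [set j | x \in C j].
have sumCD : \sum_j #|C j| = \sum_x #|D x|.
  have cardC j : #|C j| = \sum_x (x \in C j : nat) by rewrite -sum1_card big_mkcond.
  have cardD x : #|D x| = \sum_j (x \in C j : nat).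
    by rewrite -sum1_card big_mkcond; apply: eq_bigr => j _; rewrite inE.
  by rewrite (eq_bigr _ (fun j _ => cardC j)) (eq_bigr _ (fun x _ => cardD x)) exchange_big.
have leCB' : \sum_j #|C j| <= \sum_(j : J) B ?= iff [forall j, #|C j| == B].
  by apply: leqif_sum => j _; apply/leqif_eq/leCB.
have le1D : \sum_(x : T) 1 <= \sum_x #|D x| ?= iff [forall x, 1 == #|D x|].
  apply: leqif_sum => x _; apply/leqif_eq; have [j xCj] := coverC x.
  by apply/card_gt0P; exists j; rewrite inE.
have sumB : \sum_(j : J) B = \sum_(x : T) 1 by rewrite sum_nat_const sum1_card cardT mulnC.
have eqCB : \sum_j #|C j| = \sum_(j : J) B.
  by apply/eqP; rewrite eqn_leq leCB' sumB sumCD le1D.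
split=> [j|x j j' xCj xCj'].
  by have [_] := leCB'; rewrite eqCB eqxx => /esym/forallP/(_ j)/eqP.
have [_] := le1D; rewrite -sumCD eqCB sumB eqxx => /esym/forallP/(_ x)/eqP D1.
have /card_le1_eqP eqD : #|D x| <= 1 by rewrite -D1.
by apply: eqD; rewrite inE.
Qed.

Section Tree.

Variables (I : finType) (s : I -> nat).
Hypothesis s_gt0 : forall i, 0 < s i.

Local Notation node := {i : I & 'I_(s i)}.
Local Notation vertex := (tree_vertex s).
Local Notation root := (tree_root s).
Local Notation adj := (@tree_adj I s).

Definition is_centre (c : node) : bool := val (tagged c) == 0.

Definition centre (i : I) : node := Tagged (fun i => 'I_(s i)) (Ordinal (s_gt0 i)).

Definition parent (c : node) : vertex :=
  if is_centre c then root else Some (centre (tag c)).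

(* The vertices below the edge {parent c, c}. *)
Definition subtree (c : node) : pred vertex := fun v =>
  if v is Some w then (w == c) || is_centre c && (tag w == tag c) else false.

Lemma node_eq (u v : node) : tag u = tag v -> val (tagged u) = val (tagged v) -> u = v.
Proof. by case: u => i m; case: v => j n /= eq_ij; subst j => /val_inj->. Qed.

Lemma centre_tag (c : node) : is_centre c -> centre (tag c) = c.
Proof. by move/eqP=> c0; apply: node_eq. Qed.

Lemma is_centre_centre i : is_centre (centre i).
Proof. by []. Qed.

Lemma tree_adj_sym : symmetric adj.
Proof. by case=> [u|] [v|] //=; rewrite eq_sym; congr andb; rewrite eq_sym. Qed.

Lemma tree_adj_parent (c : node) : adj (parent c) (Some c).
Proof. by rewrite /parent; case: ifP => //= leaf_c; rewrite eqxx /= -/(is_centre c) leaf_c. Qed.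

Lemma tree_adjP (a b : vertex) :
  adj a b -> exists c, (a, b) = (parent c, Some c) \/ (a, b) = (Some c, parent c).
Proof.
case: a => [u|]; case: b => [v|] //=.
- case/andP=> /eqP eq_uv; rewrite -/(is_centre u) -/(is_centre v).
  case cu: (is_centre u); case cv: (is_centre v) => //= _.
    by exists v; left; rewrite /parent ifF // -eq_uv centre_tag.
  by exists u; right; rewrite /parent ifF // eq_uv centre_tag.
- by move=> cu; exists u; right; rewrite /parent ifT.
- by move=> cv; exists v; left; rewrite /parent ifT.
Qed.

Lemma mem_subtree (c : node) : Some c \in subtree c.
Proof. by rewrite unfold_in /= eqxx. Qed.

Lemma parent_notin_subtree (c : node) : parent c \notin subtree c.
Proof.
rewrite /parent; case: ifP => // leaf_c; rewrite unfold_in /= -/(is_centre c) leaf_c orbF.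
by apply: contraFN leaf_c => /eqP <-.
Qed.

Lemma in_subtree (c w : node) :
  (Some w \in subtree c) = (w == c) || is_centre c && (tag w == tag c).
Proof. by []. Qed.

Lemma centre_eqE (i : I) (c : node) : (centre i == c) = is_centre c && (i == tag c).
Proof. by apply/eqP/andP => [<- | [/centre_tag <- /eqP->]]. Qed.

Lemma subtree_cut (c : node) (a b : vertex) :
  adj a b -> a \notin subtree c -> b \in subtree c -> (a, b) = (parent c, Some c).
Proof.
case/tree_adjP=> w [] [-> ->] a_out b_in.
  suff -> : w = c by [].
  move: b_in a_out; rewrite in_subtree => /predU1P[// | /andP[cc tag_wc]].
  rewrite /parent; case: ifP => [cw _ | _]; last by rewrite in_subtree centre_eqE cc tag_wc.
  by rewrite -(centre_tag cw) -(centre_tag cc) (eqP tag_wc).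
move: b_in a_out; rewrite /parent; case: ifP => // _.
by rewrite !in_subtree centre_eqE => /orP[/andP[-> /eqP->] | /andP[-> ->]]; rewrite ?eqxx orbT.
Qed.

Lemma card_nodes (P : pred I) : #|[pred c : node | P (tag c)]| = \sum_(i | P i) s i.
Proof.
rewrite (card_tag_pred (fun i => 'I_(s i) : finType)).
by apply: eq_bigr => i _; rewrite card_ord.
Qed.

Definition covers (p : seq vertex) : {set node} :=
  [set c | traverses root p (parent c) (Some c)].

Lemma covers_arcs (p : seq vertex) (c : node) :
  robot_cycle adj root p -> c \in covers p ->
  ((parent c, Some c) \in arcs root p) && ((Some c, parent c) \in arcs root p).
Proof.
rewrite inE; apply: robot_cycle_cut_edge; [exact: tree_adj_sym | exact: parent_notin_subtree |
  exact: mem_subtree | exact: subtree_cut].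
Qed.

Definition parent_arc (e : node * bool) : vertex * vertex :=
  if e.2 then (parent e.1, Some e.1) else (Some e.1, parent e.1).

Lemma parent_arc_inj : injective parent_arc.
Proof.
have no_flip c c' : (parent c, Some c) <> (Some c', parent c').
  rewrite /parent; case: ifP => // _ [<-].
  by rewrite is_centre_centre.
by case=> c [] [c' []] //= => [[_ ->] | /no_flip | /esym/no_flip | [->]].
Qed.

Lemma card_covers (p : seq vertex) :
  robot_cycle adj root p -> 2 * #|covers p| <= size p.
Proof.
move=> cp; rewrite -(size_arcs root p) mulnC -card_bool -cardsT -cardsX.
rewrite -(card_imset _ parent_arc_inj); apply: leq_trans (card_size _).
apply/subset_leq_card/subsetP => _ /imsetP[[c b] /setXP[cov _] ->].
by have /andP[down up] := covers_arcs cp cov; case: b.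
Qed.

Lemma covers_centre (p : seq vertex) (c : node) :
  robot_cycle adj root p -> c \in covers p -> centre (tag c) \in covers p.
Proof.
move=> cp cov; case cc: (is_centre c); first by rewrite centre_tag.
have /andP[down _] := covers_arcs cp cov.
have := mem_arcs_fst down; rewrite /parent cc in_cons /= => centre_in.
rewrite inE traversesE; apply/orP; left.
apply: (path_cut_edge (parent_notin_subtree _) (mem_subtree _) (@subtree_cut _)).
- by case/andP: cp.
- by [].
- by apply/hasP; exists (Some (centre (tag c))) => //; apply: mem_subtree.
Qed.

Definition leaves (i : I) : seq vertex :=
  [seq Some (Tagged (fun i => 'I_(s i)) m) | m in predC1 (tagged (centre i))].

Definition item_walk (i : I) : seq vertex :=
  Some (centre i) :: rcons (star_walk (Some (centre i)) (leaves i)) root.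

Lemma item_walk_cycle (i : I) : robot_cycle adj root (item_walk i).
Proof.
apply: robot_cycle_excursion tree_adj_sym _ _ => //.
apply: star_walk_cycle tree_adj_sym _; apply/allP => _ /imageP[m leaf_m ->] /=.
by move: leaf_m; rewrite !inE -val_eqE eqxx.
Qed.

Lemma size_item_walk (i : I) : size (item_walk i) = 2 * s i.
Proof.
rewrite /= size_rcons size_star_walk size_image cardC1 card_ord /=.
by have := s_gt0 i; lia.
Qed.

Lemma item_walk_parent_arc (c : node) : (parent c, Some c) \in arcs root (item_walk (tag c)).
Proof.
apply: arcs_excursion; rewrite /parent; case: ifP => [/centre_tag-> | leaf_c].
  exact: mem_head.
rewrite in_cons [Some c](_ : _ = Some (Tagged _ (tagged c))) ?star_walk_arcs ?orbT //.
  by apply: image_f; rewrite !inE -val_eqE; apply/negbT.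
by case: c leaf_c.
Qed.

Section BinWalks.

Variables (J : eqType) (f : I -> J).

Definition bin_walk (j : J) : seq vertex :=
  flatten [seq item_walk i | i <- enum [pred i | f i == j]].

Lemma bin_walk_cycle (j : J) : robot_cycle adj root (bin_walk j).
Proof. by apply/robot_cycle_flatten/allP => _ /mapP[i _ ->]; apply: item_walk_cycle. Qed.

Lemma size_bin_walk (j : J) : size (bin_walk j) = 2 * \sum_(i | f i == j) s i.
Proof.
rewrite size_flatten /shape sumnE !big_map big_enum.
under eq_bigr => i _ do rewrite size_item_walk.
by rewrite -big_distrr /=; congr (2 * _).
Qed.

Lemma bin_walk_parent_arc (c : node) :
  (parent c, Some c) \in arcs root (bin_walk (f (tag c))).
Proof.
apply: (arcs_flatten _ _ (item_walk_parent_arc c)).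
  by apply/allP => _ /mapP[i _ ->]; apply: item_walk_cycle.
by apply: map_f; rewrite mem_enum inE.
Qed.

End BinWalks.

Lemma exact_bin_packing_CGE (B k : nat) :
  exact_bin_packing s B k -> CGE_yes adj root k (2 * B).
Proof.
case=> f sum_f; exists (bin_walk f); split=> [j | a b /tree_adjP[c [] [-> ->]]].
  by rewrite /cycle_length size_bin_walk sum_f bin_walk_cycle.
all: by exists (f (tag c)); rewrite traversesE bin_walk_parent_arc ?orbT.
Qed.

Lemma CGE_exact_bin_packing (B k : nat) :
  \sum_i s i = B * k -> CGE_yes adj root k (2 * B) -> exact_bin_packing s B k.
Proof.
move=> sum_s [W [cycle_W cover_W]]; pose C j := covers (W j).
have le_C_B j : #|C j| <= B.
  have [Wj len_Wj] := cycle_W j.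
  by rewrite -(leq_pmul2l (isT : 0 < 2)); apply: leq_trans (card_covers Wj) len_Wj.
have cover_C c : exists j, c \in C j.
  by have [j] := cover_W _ _ (tree_adj_parent c); exists j; rewrite inE.
have card_node : #|{: node}| = B * #|'I_k|.
  by rewrite card_ord -sum_s -card_nodes; apply: eq_card.
have [card_C uniq_C] := exact_cover le_C_B cover_C card_node.
have [f centre_f] := fin_all_exists (fun i => cover_W _ _ (tree_adj_parent (centre i))).
have C_f c j : (c \in C j) = (f (tag c) == j).
  have centre_C i : centre i \in C (f i) by rewrite inE.
  apply/idP/eqP => [cCj | <-]; first exact: uniq_C (centre_C _) (covers_centre (cycle_W j).1 cCj).
  have [j' cCj'] := cover_C c.
  by rewrite (uniq_C _ _ _ (centre_C _) (covers_centre (cycle_W j').1 cCj')).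
exists f => j; rewrite -card_nodes -(card_C j).
by apply: eq_card => c; rewrite C_f.
Qed.

End Tree.

Theorem mainTheorem12 (I : finType) (s : I -> nat) (B k : nat)
  (hs : forall i, 0 < s i) (hB : 0 < B) (hk : 0 < k)
  (hsum : \sum_(i : I) s i = B * k) :
  exact_bin_packing s B k <->
  CGE_yes (@tree_adj I s) (tree_root s) k (2 * B).
Proof.
split; first exact: exact_bin_packing_CGE.
exact: CGE_exact_bin_packing.
Qed.
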